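(* Let $n>m\geq 1$ be integers and $\gamma>0$, and write the Taylor expansion of the squared magnitude of Budak's function as $|G^{\gamma}_{mn}(j\omega)|^2=1+c_1\omega^2+c_2\omega^4+O(\omega^6)$. Then: (i) $c_1=0$ if and only if $$\gamma=\frac{(2n-1)\pm\sqrt{(2n-1)(2m-1)}}{2(n-m)},$$ and both of these values satisfy $\gamma>1/2$; for all other $\gamma>0$ the amplitude approximation is maximally flat of order $1$. (ii) There is no $\gamma>0$ with $c_1=c_2=0$; hence the amplitude approximation given by $G^{\gamma}_{mn}$ is never maximally flat of order greater than $2$, and order $2$ is attained exactly for the values of $\gamma$ in (i).
   Context: Generalized Bessel polynomials: $B_n(s,\alpha,\beta)=\sum_{k=0}^{n}\binom{n}{k}\frac{(n+k+\alpha-2)^{(k)}}{\beta^k}s^{n-k}$, with $(q)^{(k)}=q(q-1)\cdots(q-k+1)$, $(q)^{(0)}=1$. Budak's function is $G^{\gamma}_{mn}(s)=K\,\frac{B_m(2(\gamma-1)s,2,1)}{B_n(2\gamma s,2,1)}$ with $K=\frac{B_n(0,2,1)}{B_m(0,2,1)}$, so $G^{\gamma}_{mn}(0)=1$. An amplitude approximation of unit amplitude is maximally flat of order $k$ if, apart from the constant term $1$, the Taylor expansion of $|H(j\omega)|^2$ about $\omega=0$ begins with the term in $\omega^{2k}$. *)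

From Stdlib Require Import Reals Lra Lia.
Open Scope R_scope.

Definition Cx := (R * R)%type.
Definition cadd (z w : Cx) : Cx := (fst z + fst w, snd z + snd w).
Definition cmul (z w : Cx) : Cx :=
  (fst z * fst w - snd z * snd w, fst z * snd w + snd z * fst w).
Definition cscale (r : R) (z : Cx) : Cx := (r * fst z, r * snd z).
Fixpoint cpow (z : Cx) (n : nat) : Cx :=
  match n with O => (1, 0) | S n' => cmul z (cpow z n') end.
Definition cnorm2 (z : Cx) : R := fst z ^ 2 + snd z ^ 2.
Definition cinv (z : Cx) : Cx := (fst z / cnorm2 z, - snd z / cnorm2 z).
Definition cdiv (z w : Cx) : Cx := cmul z (cinv w).
Fixpoint csum (f : nat -> Cx) (N : nat) : Cx :=
  match N with O => f O | S N' => cadd (csum f N') (f N) end.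

Fixpoint ffall (q : R) (k : nat) : R :=
  match k with O => 1 | S k' => ffall q k' * (q - INR k') end.

(* coefficient of s^{n-k} in B_n(s, alpha, beta) *)
Definition bessel_coef (n k : nat) (alpha beta : R) : R :=
  C n k * ffall (INR (n + k) + alpha - 2) k / beta ^ k.

Definition besselR (n : nat) (s alpha beta : R) : R :=
  sum_f_R0 (fun k => bessel_coef n k alpha beta * s ^ (n - k)) n.

Definition besselC (n : nat) (s : Cx) (alpha beta : R) : Cx :=
  csum (fun k => cscale (bessel_coef n k alpha beta) (cpow s (n - k))) n.

Definition budakK (m n : nat) : R := besselR n 0 2 1 / besselR m 0 2 1.
Definition budakG (gamma : R) (m n : nat) (s : Cx) : Cx :=
  cscale (budakK m n)
    (cdiv (besselC m (cscale (2 * (gamma - 1)) s) 2 1)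
          (besselC n (cscale (2 * gamma) s) 2 1)).

Definition budak_magsq (gamma : R) (m n : nat) (omega : R) : R :=
  cnorm2 (budakG gamma m n (0, omega)).

Definition has_expansion (f : R -> R) (c : nat -> R) (N : nat) : Prop :=
  exists delta M : R, 0 < delta /\
    forall w : R, Rabs w < delta ->
      Rabs (f w - sum_f_R0 (fun i => c i * w ^ i) N) <= M * Rabs w ^ (S N).

Definition expansion_c1c2 (f : R -> R) (c1 c2 : R) : Prop :=
  has_expansion f
    (fun i => match i with 0%nat => 1 | 2%nat => c1 | 4%nat => c2 | _ => 0 end) 5.

Definition maximally_flat (f : R -> R) (k : nat) : Prop :=
  exists c : nat -> R,
    c 0%nat = 1 /\ (forall i, (0 < i < 2 * k)%nat -> c i = 0) /\
    c (2 * k)%nat <> 0 /\ has_expansion f c (2 * k).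

Definition gamma_plus (m n : nat) : R :=
  (INR (2 * n - 1) + sqrt (INR (2 * n - 1) * INR (2 * m - 1))) / (2 * INR (n - m)).
Definition gamma_minus (m n : nat) : R :=
  (INR (2 * n - 1) - sqrt (INR (2 * n - 1) * INR (2 * m - 1))) / (2 * INR (n - m)).

(* Write P = 2n - 1 and Q = 2m - 1.  On the imaginary axis the real and imaginary parts of
   B_k(jy,2,1) are even and odd polynomials whose coefficients are linked by the ratios
   a_(j+1)/a_j = (k-j)/((j+1)(2k-j)); hence
     |B_k(jy,2,1)|^2 / B_k(0,2,1)^2 = 1 + y^2/(4(2k-1)) + (k-1) y^4/(16(2k-1)^2(2k-3)) + O(y^6).
   Dividing the expansions for k = m at y = 2(gamma-1)w and for k = n at y = 2 gamma w gives
   c1 = (gamma-1)^2/Q - gamma^2/P, a quadratic in gamma with the two stated roots, and, when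
   c1 = 0, c2 = (2 gamma)^4 (n-m) / (16 P^2 (2m-3)(2n-3)), which is never 0.  The coefficients
   of an expansion are unique, so this settles the orders of maximal flatness. *)

From Stdlib Require Import Reals Lra Lia Factorial.
Open Scope R_scope.

Lemma Rle_pow_le1 (x : R) (m n : nat) : 0 <= x <= 1 -> (m <= n)%nat -> x ^ n <= x ^ m.
Proof.
  intros Hx Hmn. induction Hmn as [|n _ IH]; [lra|].
  simpl. assert (0 <= x ^ n) by (apply pow_le; lra). nra.
Qed.

(** * Expansions at 0 *)

(* [bigO k h]: h(x) = O(x^k) as x -> 0; for k = 0 it says that h is bounded near 0. *)
Definition bigO (k : nat) (h : R -> R) : Prop :=
  exists delta M, 0 < delta /\ forall x, Rabs x < delta -> Rabs (h x) <= M * Rabs x ^ k.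

Lemma has_expansion_bigO f c N :
  has_expansion f c N <-> bigO (S N) (fun w => f w - sum_f_R0 (fun i => c i * w ^ i) N).
Proof. reflexivity. Qed.

Lemma bigO_ext_near k h g :
  (exists d, 0 < d /\ forall x, Rabs x < d -> h x = g x) -> bigO k g -> bigO k h.
Proof.
  intros [d [Hd E]] [e [M [He G]]]. exists (Rmin d e), M. split; [now apply Rmin_pos|].
  intros x Hx. pose proof (Rmin_l d e). pose proof (Rmin_r d e).
  rewrite E by lra. apply G. lra.
Qed.

Lemma bigO_ext k h g : (forall x, h x = g x) -> bigO k g -> bigO k h.
Proof. intros E. apply bigO_ext_near. exists 1. split; [lra|auto]. Qed.

Lemma bigO_plus k f g : bigO k f -> bigO k g -> bigO k (fun x => f x + g x).
Proof.
  intros [d1 [M1 [Hd1 F]]] [d2 [M2 [Hd2 G]]]. exists (Rmin d1 d2), (M1 + M2).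
  split; [now apply Rmin_pos|]. intros x Hx.
  pose proof (Rmin_l d1 d2). pose proof (Rmin_r d1 d2).
  specialize (F x ltac:(lra)). specialize (G x ltac:(lra)).
  eapply Rle_trans; [apply Rabs_triang|]. lra.
Qed.

Lemma bigO_mul j k f g : bigO j f -> bigO k g -> bigO (j + k) (fun x => f x * g x).
Proof.
  intros [d1 [M1 [Hd1 F]]] [d2 [M2 [Hd2 G]]]. exists (Rmin d1 d2), (Rabs M1 * Rabs M2).
  split; [now apply Rmin_pos|]. intros x Hx.
  pose proof (Rmin_l d1 d2). pose proof (Rmin_r d1 d2).
  specialize (F x ltac:(lra)). specialize (G x ltac:(lra)).
  assert (0 <= Rabs x ^ j) by (apply pow_le, Rabs_pos).
  assert (0 <= Rabs x ^ k) by (apply pow_le, Rabs_pos).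
  pose proof (Rle_abs M1). pose proof (Rle_abs M2).
  rewrite Rabs_mult, pow_add.
  replace (Rabs M1 * Rabs M2 * (Rabs x ^ j * Rabs x ^ k))
    with ((Rabs M1 * Rabs x ^ j) * (Rabs M2 * Rabs x ^ k)) by ring.
  apply Rmult_le_compat; try apply Rabs_pos; nra.
Qed.

Lemma bigO_weaken j k f : (j <= k)%nat -> bigO k f -> bigO j f.
Proof.
  intros Hjk [d [M [Hd F]]]. exists (Rmin d 1), (Rabs M). split; [apply Rmin_pos; lra|].
  intros x Hx. pose proof (Rmin_l d 1). pose proof (Rmin_r d 1).
  specialize (F x ltac:(lra)).
  assert (Rabs x ^ k <= Rabs x ^ j) by (apply Rle_pow_le1; [split; [apply Rabs_pos|lra]|auto]).
  assert (0 <= Rabs x ^ k) by (apply pow_le, Rabs_pos).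
  pose proof (Rle_abs M). pose proof (Rabs_pos M). nra.
Qed.

Lemma bigO_monomial k j c : (k <= j)%nat -> bigO k (fun x => c * x ^ j).
Proof.
  intros Hkj. exists 1, (Rabs c). split; [lra|]. intros x Hx.
  rewrite Rabs_mult, <- RPow_abs. apply Rmult_le_compat_l; [apply Rabs_pos|].
  apply Rle_pow_le1; [split; [apply Rabs_pos|lra]|auto].
Qed.

Lemma bigO_monomials k c1 c2 c3 i j l : (k <= i)%nat -> (k <= j)%nat -> (k <= l)%nat ->
  bigO k (fun x => c1 * x ^ i + c2 * x ^ j + c3 * x ^ l).
Proof. intros. repeat apply bigO_plus; now apply bigO_monomial. Qed.

Lemma bigO_mul_bounded k f g : bigO k f -> bigO 0 g -> bigO k (fun x => f x * g x).
Proof.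
  intros F G. apply (bigO_ext _ _ (fun x => g x * f x)); [intros; ring|].
  exact (bigO_mul 0 k _ _ G F).
Qed.

Lemma bigO_scal k c f : bigO k f -> bigO k (fun x => c * f x).
Proof.
  intros F. apply (bigO_ext _ _ (fun x => f x * (c * x ^ 0))); [intros; simpl; ring|].
  apply bigO_mul_bounded, bigO_monomial; auto.
Qed.

Lemma bigO_minus k f g : bigO k f -> bigO k g -> bigO k (fun x => f x - g x).
Proof.
  intros F G. apply (bigO_ext _ _ (fun x => f x + (-1) * g x)); [intros; ring|].
  apply bigO_plus; [|apply bigO_scal]; auto.
Qed.

Lemma bigO_comp_scale k a f : bigO k f -> bigO k (fun x => f (a * x)).
Proof.
  intros [d [M [Hd F]]]. pose proof (Rabs_pos a).
  exists (d / (Rabs a + 1)), (M * Rabs a ^ k). split; [apply Rdiv_lt_0_compat; lra|].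
  intros x Hx. pose proof (Rabs_pos x).
  assert (Hax : Rabs (a * x) < d).
  { assert (Rabs x * (Rabs a + 1) < d).
    { apply (Rmult_lt_compat_r (Rabs a + 1)) in Hx; [|lra].
      unfold Rdiv in Hx. rewrite Rmult_assoc, Rinv_l in Hx; lra. }
    rewrite Rabs_mult. nra. }
  specialize (F _ Hax). rewrite Rabs_mult, Rpow_mult_distr in F. lra.
Qed.

Lemma bigO_mul_approx k h p g q :
  bigO k (fun x => h x - p x) -> bigO k (fun x => g x - q x) -> bigO 0 p -> bigO 0 q ->
  bigO k (fun x => h x * g x - p x * q x).
Proof.
  intros Hh Hg Hp Hq.
  apply (bigO_ext _ _
    (fun x => (h x - p x) * (g x - q x) + (h x - p x) * q x + (g x - q x) * p x)).
  { intros x; ring. }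
  repeat apply bigO_plus; apply bigO_mul_bounded; auto.
  apply (bigO_weaken _ k); [lia|auto].
Qed.

Lemma bigO1_bounded_away D d0 : d0 <> 0 -> bigO 1 (fun x => D x - d0) ->
  exists d, 0 < d /\ forall x, Rabs x < d -> Rabs d0 / 2 <= Rabs (D x).
Proof.
  intros Hd0 [d [M [Hd F]]].
  assert (Ha : 0 < Rabs d0) by (apply Rabs_pos_lt; auto).
  pose proof (Rabs_pos M). pose proof (Rle_abs M).
  set (r := Rabs d0 / (2 * (Rabs M + 1))).
  assert (Hr : 0 < r) by (apply Rdiv_lt_0_compat; lra).
  assert (Hr' : r * (Rabs M + 1) = Rabs d0 / 2) by (unfold r; field; lra).
  exists (Rmin d r). split; [now apply Rmin_pos|]. intros x Hx.
  pose proof (Rmin_l d r). pose proof (Rmin_r d r). pose proof (Rabs_pos x).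
  specialize (F x ltac:(lra)). rewrite pow_1 in F.
  assert (Rabs M * Rabs x <= Rabs M * r) by (apply Rmult_le_compat_l; lra).
  assert (M * Rabs x <= Rabs M * Rabs x) by (apply Rmult_le_compat_r; lra).
  assert (Rabs M * r <= Rabs d0 / 2) by nra.
  assert (Rabs (D x - d0) <= Rabs d0 / 2) by lra.
  pose proof (Rabs_triang_inv d0 (d0 - D x)) as Htri.
  replace (d0 - (d0 - D x)) with (D x) in Htri by ring.
  rewrite (Rabs_minus_sym d0 (D x)) in Htri. lra.
Qed.

Lemma bigO_inv D d0 : d0 <> 0 -> bigO 1 (fun x => D x - d0) -> bigO 0 (fun x => / D x).
Proof.
  intros Hd0 HD. destruct (bigO1_bounded_away D d0 Hd0 HD) as [e [He Hlow]].
  assert (Ha : 0 < Rabs d0) by (apply Rabs_pos_lt; auto).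
  exists e, (2 / Rabs d0). split; auto. intros x Hx. specialize (Hlow x Hx).
  rewrite Rabs_inv. simpl. rewrite Rmult_1_r.
  replace (2 / Rabs d0) with (/ (Rabs d0 / 2)) by (field; lra).
  apply Rinv_le_contravar; lra.
Qed.

Lemma sqnorm_jet (Re Im : R -> R) p0 p2 p4 q1 q3 q5 :
  bigO 6 (fun x => Re x - (p0 + p2 * x ^ 2 + p4 * x ^ 4)) ->
  bigO 6 (fun x => Im x - (q1 * x + q3 * x ^ 3 + q5 * x ^ 5)) ->
  bigO 6 (fun x => Re x ^ 2 + Im x ^ 2 -
    (p0 ^ 2 + (2 * p0 * p2 + q1 ^ 2) * x ^ 2 + (p2 ^ 2 + 2 * p0 * p4 + 2 * q1 * q3) * x ^ 4)).
Proof.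
  intros HR HI.
  set (A := fun x => p0 + p2 * x ^ 2 + p4 * x ^ 4).
  set (B := fun x => q1 * x + q3 * x ^ 3 + q5 * x ^ 5).
  assert (HA : bigO 0 A).
  { apply (bigO_ext _ _ (fun x => p0 * x ^ 0 + p2 * x ^ 2 + p4 * x ^ 4));
      [intros; unfold A; simpl; ring|apply bigO_monomials; lia]. }
  assert (HB : bigO 0 B).
  { apply (bigO_ext _ _ (fun x => q1 * x ^ 1 + q3 * x ^ 3 + q5 * x ^ 5));
      [intros; unfold B; simpl; ring|apply bigO_monomials; lia]. }
  apply (bigO_ext _ _ (fun x => (Re x * Re x - A x * A x) + (Im x * Im x - B x * B x)
    + ((2 * p2 * p4 + 2 * q1 * q5 + q3 ^ 2) * x ^ 6 + (p4 ^ 2 + 2 * q3 * q5) * x ^ 8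
       + q5 ^ 2 * x ^ 10))).
  { intros x; unfold A, B; ring. }
  apply bigO_plus; [apply bigO_plus|apply bigO_monomials; lia]; now apply bigO_mul_approx.
Qed.

Lemma quotient_jet (N D : R -> R) n0 n2 n4 d0 d2 d4 : d0 <> 0 ->
  bigO 6 (fun x => N x - (n0 + n2 * x ^ 2 + n4 * x ^ 4)) ->
  bigO 6 (fun x => D x - (d0 + d2 * x ^ 2 + d4 * x ^ 4)) ->
  let q0 := n0 / d0 in let q2 := (n2 - q0 * d2) / d0 in
  let q4 := (n4 - q0 * d4 - q2 * d2) / d0 in
  bigO 6 (fun x => N x / D x - (q0 + q2 * x ^ 2 + q4 * x ^ 4)).
Proof.
  intros Hd0 HN HD q0 q2 q4.
  assert (HD1 : bigO 1 (fun x => D x - d0)).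
  { apply (bigO_ext _ _ (fun x =>
      (D x - (d0 + d2 * x ^ 2 + d4 * x ^ 4)) + (d2 * x ^ 2 + d4 * x ^ 4 + 0 * x ^ 2))).
    { intros; ring. }
    apply bigO_plus; [apply (bigO_weaken _ 6); [lia|auto]|apply bigO_monomials; lia]. }
  destruct (bigO1_bounded_away D d0 Hd0 HD1) as [e [He Hlow]].
  assert (Ha : 0 < Rabs d0) by (apply Rabs_pos_lt; auto).
  set (Q := fun x => q0 + q2 * x ^ 2 + q4 * x ^ 4).
  apply (bigO_ext_near _ _ (fun x => (N x - Q x * D x) * / D x)).
  { exists e. split; auto. intros x Hx. specialize (Hlow x Hx).
    assert (D x <> 0) by (intro Z; rewrite Z, Rabs_R0 in Hlow; lra).
    unfold Q. field. auto. }
  apply bigO_mul_bounded; [|exact (bigO_inv D d0 Hd0 HD1)].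
  (* the choice of q0, q2, q4 cancels the terms of degree < 6 *)
  apply (bigO_ext _ _ (fun x => (N x - (n0 + n2 * x ^ 2 + n4 * x ^ 4))
      - (D x - (d0 + d2 * x ^ 2 + d4 * x ^ 4)) * Q x
      + (- (q2 * d4 + q4 * d2) * x ^ 6 + - (q4 * d4) * x ^ 8 + 0 * x ^ 6))).
  { intros x. unfold Q, q4, q2, q0. field. auto. }
  apply bigO_plus; [apply bigO_minus; auto|apply bigO_monomials; lia].
  apply bigO_mul_bounded; auto.
  apply (bigO_ext _ _ (fun x => q0 * x ^ 0 + q2 * x ^ 2 + q4 * x ^ 4));
    [intros; unfold Q; simpl; ring|apply bigO_monomials; lia].
Qed.

Lemma bigO_poly_tail (h : nat -> R) (L t : nat) :
  bigO (S L) (fun y => sum_f_R0 (fun j => h j * y ^ j) (L + t) - sum_f_R0 (fun j => h j * y ^ j) L).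
Proof.
  induction t as [|t IH].
  - apply (bigO_ext _ _ (fun y => 0 * y ^ S L)); [intros; rewrite Nat.add_0_r; ring|].
    now apply bigO_monomial.
  - rewrite Nat.add_succ_r.
    apply (bigO_ext _ _ (fun y => (sum_f_R0 (fun j => h j * y ^ j) (L + t)
        - sum_f_R0 (fun j => h j * y ^ j) L) + h (S (L + t)) * y ^ S (L + t))).
    { intros; simpl; ring. }
    apply bigO_plus; [auto|apply bigO_monomial; lia].
Qed.

Lemma has_expansion_trunc f c N L : has_expansion f c N -> (L <= N)%nat -> has_expansion f c L.
Proof.
  rewrite !has_expansion_bigO. intros H HLN.
  replace N with (L + (N - L))%nat in H by lia.
  apply (bigO_ext _ _ (fun w =>
    (f w - sum_f_R0 (fun i => c i * w ^ i) (L + (N - L)))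
    + (sum_f_R0 (fun i => c i * w ^ i) (L + (N - L)) - sum_f_R0 (fun i => c i * w ^ i) L))).
  { intros; ring. }
  apply bigO_plus; [apply (bigO_weaken _ (S (L + (N - L)))); [lia|auto]|apply bigO_poly_tail].
Qed.

Lemma const_zero_of_bound (a K d : R) :
  0 < d -> (forall w, 0 < Rabs w < d -> Rabs a <= K * Rabs w) -> a = 0.
Proof.
  intros Hd H. destruct (Req_dec a 0) as [|Ha]; auto. exfalso.
  assert (Hpa : 0 < Rabs a) by (apply Rabs_pos_lt; auto).
  pose proof (Rabs_pos K). pose proof (Rle_abs K).
  set (w := Rmin (d / 2) (Rabs a / (2 * (Rabs K + 1)))).
  assert (Hw : 0 < w) by (unfold w; apply Rmin_pos; apply Rdiv_lt_0_compat; lra).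
  assert (Hw1 : w <= d / 2) by apply Rmin_l.
  assert (Hw2 : w * (2 * (Rabs K + 1)) <= Rabs a).
  { pose proof (Rmin_r (d / 2) (Rabs a / (2 * (Rabs K + 1)))) as Hr. fold w in Hr.
    apply (Rmult_le_compat_r (2 * (Rabs K + 1))) in Hr; [|lra].
    unfold Rdiv in Hr. rewrite Rmult_assoc, Rinv_l in Hr; lra. }
  specialize (H w). rewrite Rabs_pos_eq in H by lra. specialize (H ltac:(lra)). nra.
Qed.

Lemma poly_sum_bound (e : nat -> R) (w : R) L : Rabs w <= 1 ->
  Rabs (sum_f_R0 (fun i => e i * w ^ i) L) <= sum_f_R0 (fun i => Rabs (e i)) L.
Proof.
  intros Hw. induction L as [|L IH]; [simpl; rewrite Rmult_1_r; lra|].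
  rewrite !tech5. eapply Rle_trans; [apply Rabs_triang|]. rewrite Rabs_mult, <- RPow_abs.
  assert (Rabs w ^ S L <= 1)
    by (rewrite <- (pow1 (S L)); apply pow_incr; split; [apply Rabs_pos|lra]).
  pose proof (Rabs_pos (e (S L))). pose proof (pow_le (Rabs w) (S L) (Rabs_pos w)). nra.
Qed.

Lemma poly_sum_split_head (e : nat -> R) (w : R) L :
  sum_f_R0 (fun i => e i * w ^ i) (S L) = e 0%nat + w * sum_f_R0 (fun i => e (S i) * w ^ i) L.
Proof.
  rewrite decomp_sum by lia. simpl pred. rewrite scal_sum.
  simpl pow at 1. f_equal; [ring|]. apply sum_eq. intros; simpl; ring.
Qed.

(* Stated on a punctured neighbourhood so that the induction can divide by w. *)
Lemma poly_coef_zero (L : nat) : forall (e : nat -> R) (d M : R), 0 < d ->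
  (forall w, 0 < Rabs w < d ->
     Rabs (sum_f_R0 (fun i => e i * w ^ i) L) <= M * Rabs w ^ S L) ->
  forall i, (i <= L)%nat -> e i = 0.
Proof.
  induction L as [|L IH]; intros e d M Hd H.
  - intros i Hi. replace i with 0%nat by lia.
    apply (const_zero_of_bound _ M d Hd). intros w Hw. specialize (H w Hw).
    simpl in H. now rewrite !Rmult_1_r in H.
  - set (q w := sum_f_R0 (fun i => e (S i) * w ^ i) L).
    assert (He0 : e 0%nat = 0).
    { set (Q := sum_f_R0 (fun i => Rabs (e (S i))) L).
      apply (const_zero_of_bound _ (Rabs M + Q) (Rmin d 1)); [apply Rmin_pos; lra|].
      intros w Hw. pose proof (Rmin_l d 1). pose proof (Rmin_r d 1).
      specialize (H w ltac:(lra)). rewrite poly_sum_split_head in H. fold (q w) in H.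
      assert (Rabs (q w) <= Q) by (apply poly_sum_bound; lra).
      assert (Rabs w ^ S (S L) <= Rabs w) by
        (rewrite <- (pow_1 (Rabs w)) at 2; apply Rle_pow_le1; [split; [apply Rabs_pos|lra]|lia]).
      pose proof (Rabs_triang (e 0%nat + w * q w) (- (w * q w))) as Ht.
      replace (e 0%nat + w * q w + - (w * q w)) with (e 0%nat) in Ht by ring.
      rewrite Rabs_Ropp, Rabs_mult in Ht.
      pose proof (pow_le (Rabs w) (S (S L)) (Rabs_pos w)).
      pose proof (Rle_abs M). pose proof (Rabs_pos M). pose proof (Rabs_pos (q w)).
      assert (Rabs w * Rabs (q w) <= Rabs w * Q) by (apply Rmult_le_compat_l; lra).
      assert (M * Rabs w ^ S (S L) <= Rabs M * Rabs w) by nra.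
      lra. }
    assert (Htail : forall i, (i <= L)%nat -> e (S i) = 0).
    { apply (IH (fun i => e (S i)) d M Hd). intros w Hw. specialize (H w Hw).
      rewrite poly_sum_split_head, He0, Rplus_0_l, Rabs_mult in H.
      replace (M * Rabs w ^ S (S L)) with (Rabs w * (M * Rabs w ^ S L)) in H by (simpl; ring).
      apply Rmult_le_reg_l in H; lra. }
    intros [|i] Hi; [auto|]. apply Htail. lia.
Qed.

Lemma has_expansion_coef_unique f c c' N N' :
  has_expansion f c N -> has_expansion f c' N' ->
  forall i, (i <= N)%nat -> (i <= N')%nat -> c i = c' i.
Proof.
  intros H1 H2 i Hi Hi'. set (L := Nat.min N N').
  apply (has_expansion_trunc _ _ _ L) in H1; [|unfold L; lia].
  apply (has_expansion_trunc _ _ _ L) in H2; [|unfold L; lia].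
  destruct H1 as [d1 [M1 [Hd1 F1]]]. destruct H2 as [d2 [M2 [Hd2 F2]]].
  enough (c i - c' i = 0) by lra.
  apply (poly_coef_zero L (fun i => c i - c' i) (Rmin d1 d2) (M1 + M2));
    [now apply Rmin_pos| |unfold L; lia].
  intros w Hw. pose proof (Rmin_l d1 d2). pose proof (Rmin_r d1 d2).
  specialize (F1 w ltac:(lra)). specialize (F2 w ltac:(lra)).
  rewrite (sum_eq _ (fun i => c i * w ^ i - c' i * w ^ i)) by (intros; ring).
  rewrite minus_sum.
  replace (sum_f_R0 (fun i => c i * w ^ i) L - sum_f_R0 (fun i => c' i * w ^ i) L)
    with ((f w - sum_f_R0 (fun i => c' i * w ^ i) L) - (f w - sum_f_R0 (fun i => c i * w ^ i) L))
    by ring.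
  eapply Rle_trans; [apply Rabs_triang|]. rewrite Rabs_Ropp. lra.
Qed.

Lemma maximally_flat_of_expansion f c N k :
  has_expansion f c N -> (2 * k <= N)%nat -> c 0%nat = 1 ->
  (forall i, (0 < i < 2 * k)%nat -> c i = 0) -> c (2 * k)%nat <> 0 -> maximally_flat f k.
Proof.
  intros Hf HkN H0 Hz Hk. exists c. repeat split; auto. now apply (has_expansion_trunc _ _ N).
Qed.

Lemma maximally_flat_coef_zero f c N k : has_expansion f c N -> maximally_flat f k ->
  forall i, (0 < i < 2 * k)%nat -> (i <= N)%nat -> c i = 0.
Proof.
  intros Hf [c' [_ [Hz [_ Hf']]]] i Hi HiN.
  rewrite (has_expansion_coef_unique f c c' N (2 * k) Hf Hf' i HiN ltac:(lia)). now apply Hz.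
Qed.

Lemma expansion_c1c2_unique f c1 c2 d1 d2 :
  expansion_c1c2 f c1 c2 -> expansion_c1c2 f d1 d2 -> c1 = d1 /\ c2 = d2.
Proof.
  intros H1 H2.
  split; [apply (has_expansion_coef_unique _ _ _ _ _ H1 H2 2)
         |apply (has_expansion_coef_unique _ _ _ _ _ H1 H2 4)]; lia.
Qed.

(** * Generalized Bessel polynomials on the imaginary axis *)

Lemma cpow_imag_axis (y : R) (j : nat) :
  cpow (0, y) j = (y ^ j * fst (cpow (0, 1) j), y ^ j * snd (cpow (0, 1) j)).
Proof.
  induction j as [|j IH]; simpl; [f_equal; ring|].
  rewrite IH. unfold cmul; simpl. f_equal; ring.
Qed.

Lemma fst_csum f N : fst (csum f N) = sum_f_R0 (fun k => fst (f k)) N.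
Proof. induction N as [|N IH]; simpl; auto. now rewrite IH. Qed.

Lemma snd_csum f N : snd (csum f N) = sum_f_R0 (fun k => snd (f k)) N.
Proof. induction N as [|N IH]; simpl; auto. now rewrite IH. Qed.

Lemma sum_f_R0_rev (h : nat -> R) (m : nat) :
  sum_f_R0 (fun k => h (m - k)%nat) m = sum_f_R0 h m.
Proof.
  induction m as [|m IH]; [reflexivity|].
  rewrite (decomp_sum _ (S m)) by lia. simpl pred. rewrite Nat.sub_0_r.
  rewrite (sum_eq (fun i => h (S m - S i)%nat) (fun k => h (m - k)%nat)) by reflexivity.
  rewrite IH. simpl. ring.
Qed.

Lemma sum_f_R0_pad_zero (h : nat -> R) (m t : nat) :
  (forall j, (m < j)%nat -> h j = 0) -> sum_f_R0 h (m + t) = sum_f_R0 h m.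
Proof.
  intros Hz. induction t as [|t IH]; [now rewrite Nat.add_0_r|].
  rewrite Nat.add_succ_r. simpl. rewrite IH, Hz by lia. ring.
Qed.

Lemma ffall_INR_fact (a k : nat) :
  ffall (INR (a + k)) k = INR (fact (a + k)) / INR (fact a).
Proof.
  revert a. induction k as [|k IH]; intros a.
  - simpl. rewrite Nat.add_0_r. field. apply INR_fact_neq_0.
  - simpl ffall. replace (a + S k)%nat with (S a + k)%nat by lia. rewrite IH.
    replace (S a + k)%nat with (S (a + k)) by lia.
    replace (INR (S (a + k)) - INR k) with (INR (S a)) by (rewrite !S_INR, plus_INR; ring).
    rewrite !fact_simpl, !mult_INR.
    field. split; [apply INR_fact_neq_0|apply not_0_INR; lia].
Qed.

Lemma bessel_coef_fact (m k : nat) : (k <= m)%nat ->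
  bessel_coef m k 2 1 = INR (fact (m + k)) / (INR (fact k) * INR (fact (m - k))).
Proof.
  intros Hk. unfold bessel_coef, C.
  replace (INR (m + k) + 2 - 2) with (INR (m + k)) by ring.
  rewrite ffall_INR_fact, pow1. field. repeat split; apply INR_fact_neq_0.
Qed.

Lemma bessel_coef_diag_pos m : 0 < bessel_coef m m 2 1.
Proof.
  rewrite bessel_coef_fact by lia.
  apply Rdiv_lt_0_compat; [|apply Rmult_lt_0_compat]; apply INR_fact_lt_0.
Qed.

(* The coefficient of s^j in B_m(s,2,1), divided by the constant term, as a product of
   consecutive ratios; the factor m - j makes it vanish for j > m. *)
Fixpoint bessel_ratio (m j : nat) : R :=
  match j with
  | O => 1
  | S j' => bessel_ratio m j' * (INR m - INR j') / (INR (S j') * (2 * INR m - INR j'))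
  end.

Lemma bessel_ratio_zero m j : (m < j)%nat -> bessel_ratio m j = 0.
Proof.
  induction j as [|j IH]; intros Hj; [lia|]. simpl bessel_ratio.
  destruct (Nat.eq_dec m j) as [->|Hne].
  - unfold Rminus. rewrite Rplus_opp_r. unfold Rdiv. ring.
  - rewrite IH by lia. unfold Rdiv. ring.
Qed.

Lemma bessel_coef_ratio m j : (j <= m)%nat ->
  bessel_coef m (m - j) 2 1 = bessel_coef m m 2 1 * bessel_ratio m j.
Proof.
  induction j as [|j IH]; intros Hj; [rewrite Nat.sub_0_r; simpl; ring|].
  cbn [bessel_ratio]. unfold Rdiv.
  rewrite <- !Rmult_assoc, <- IH by lia. rewrite !bessel_coef_fact by lia.
  set (k := (m - S j)%nat).
  replace (m - j)%nat with (S k) by (unfold k; lia).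
  replace (m - S k)%nat with j by (unfold k; lia).
  replace (m + S k)%nat with (S (m + k)) by lia.
  replace (INR m - INR j) with (INR (S k)) by (unfold k; rewrite <- minus_INR by lia; f_equal; lia).
  replace (2 * INR m - INR j) with (INR (S (m + k)))
    by (unfold k; rewrite S_INR, plus_INR, minus_INR, S_INR by lia; ring).
  replace (m - k)%nat with (S j) by (unfold k; lia).
  rewrite !fact_simpl, !mult_INR.
  pose proof (INR_fact_neq_0 j). pose proof (INR_fact_neq_0 k). pose proof (INR_fact_neq_0 (m + k)).
  assert (INR (S j) <> 0) by (apply not_0_INR; lia).
  assert (INR (S k) <> 0) by (apply not_0_INR; lia).
  assert (INR (S (m + k)) <> 0) by (apply not_0_INR; lia).
  field. tauto.
Qed.

Lemma besselC_imag_axis (m : nat) (y : R) :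
  let a j := bessel_coef m m 2 1 * bessel_ratio m j in
  fst (besselC m (0, y) 2 1) = sum_f_R0 (fun j => a j * fst (cpow (0, 1) j) * y ^ j) (5 + m) /\
  snd (besselC m (0, y) 2 1) = sum_f_R0 (fun j => a j * snd (cpow (0, 1) j) * y ^ j) (5 + m).
Proof.
  intros a. unfold besselC. rewrite fst_csum, snd_csum, (Nat.add_comm 5 m).
  split; (rewrite sum_f_R0_pad_zero;
            [|intros j Hj; unfold a; rewrite bessel_ratio_zero by lia; ring]);
    rewrite <- sum_f_R0_rev; apply sum_eq; intros k Hk; unfold cscale, a;
    rewrite cpow_imag_axis; simpl fst; simpl snd;
    rewrite <- bessel_coef_ratio by lia; replace (m - (m - k))%nat with k by lia; ring.
Qed.

Definition bessel_e1 m := bessel_ratio m 1 ^ 2 - 2 * bessel_ratio m 2.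
Definition bessel_e2 m :=
  bessel_ratio m 2 ^ 2 + 2 * bessel_ratio m 4 - 2 * bessel_ratio m 1 * bessel_ratio m 3.

Lemma besselC_sqnorm_jet (m : nat) (a : R) :
  let b0 := bessel_coef m m 2 1 in
  bigO 6 (fun x => cnorm2 (besselC m (0, a * x) 2 1) -
    (b0 ^ 2 + b0 ^ 2 * a ^ 2 * bessel_e1 m * x ^ 2 + b0 ^ 2 * a ^ 4 * bessel_e2 m * x ^ 4)).
Proof.
  intros b0. set (r := bessel_ratio m).
  set (Re := fun y => fst (besselC m (0, y) 2 1)).
  set (Im := fun y => snd (besselC m (0, y) 2 1)).
  assert (HR : bigO 6 (fun y => Re y - (b0 + - b0 * r 2%nat * y ^ 2 + b0 * r 4%nat * y ^ 4))).
  { apply (bigO_ext _ _ (fun y =>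
      sum_f_R0 (fun j => b0 * r j * fst (cpow (0, 1) j) * y ^ j) (5 + m)
      - sum_f_R0 (fun j => b0 * r j * fst (cpow (0, 1) j) * y ^ j) 5)); [|apply bigO_poly_tail].
    intros y. unfold Re. rewrite (proj1 (besselC_imag_axis m y)).
    set (F := sum_f_R0 _ (5 + m)). cbn [sum_f_R0 cpow cmul fst snd pow]. unfold r.
    cbn [bessel_ratio]. ring. }
  assert (HI : bigO 6 (fun y =>
    Im y - (b0 * r 1%nat * y + - b0 * r 3%nat * y ^ 3 + b0 * r 5%nat * y ^ 5))).
  { apply (bigO_ext _ _ (fun y =>
      sum_f_R0 (fun j => b0 * r j * snd (cpow (0, 1) j) * y ^ j) (5 + m)
      - sum_f_R0 (fun j => b0 * r j * snd (cpow (0, 1) j) * y ^ j) 5)); [|apply bigO_poly_tail].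
    intros y. unfold Im. rewrite (proj2 (besselC_imag_axis m y)).
    set (F := sum_f_R0 _ (5 + m)). cbn [sum_f_R0 cpow cmul fst snd pow]. unfold r.
    cbn [bessel_ratio]. ring. }
  apply (bigO_comp_scale _ a) in HR. apply (bigO_comp_scale _ a) in HI.
  refine (bigO_ext _ _ _ _ (sqnorm_jet (fun x => Re (a * x)) (fun x => Im (a * x))
    b0 (- b0 * r 2%nat * a ^ 2) (b0 * r 4%nat * a ^ 4)
    (b0 * r 1%nat * a) (- b0 * r 3%nat * a ^ 3) (b0 * r 5%nat * a ^ 5) _ _)).
  - intros x. unfold cnorm2, Re, Im, bessel_e1, bessel_e2. fold r. cbn [r bessel_ratio]. ring.
  - refine (bigO_ext _ _ _ _ HR). intros; ring.
  - refine (bigO_ext _ _ _ _ HI). intros; ring.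
Qed.

Lemma bessel_e1_eq m : (1 <= m)%nat -> bessel_e1 m = / (4 * (2 * INR m - 1)).
Proof.
  intros Hm. apply le_INR in Hm. simpl in Hm. unfold bessel_e1. cbn [bessel_ratio]. simpl INR.
  field. lra.
Qed.

Lemma bessel_e2_eq m : (1 <= m)%nat ->
  bessel_e2 m = (INR m - 1) / (16 * (2 * INR m - 1) ^ 2 * (2 * INR m - 3)).
Proof.
  (* for m = 1 the recursion of [bessel_ratio] divides by 2m - 2 = 0, so compute directly *)
  intros Hm. destruct (Nat.eq_dec m 1) as [->|Hm1].
  - unfold bessel_e2.
    rewrite (bessel_ratio_zero 1 2), (bessel_ratio_zero 1 3), (bessel_ratio_zero 1 4) by lia.
    simpl INR. unfold Rdiv. ring.
  - assert (2 <= INR m) by (apply (le_INR 2); lia).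
    unfold bessel_e2. cbn [bessel_ratio]. simpl INR. field. lra.
Qed.

(** * The coefficients c1 and c2 of Budak's function *)

Lemma budak_magsq_eq g m n w :
  budak_magsq g m n w = budakK m n ^ 2 *
    (cnorm2 (besselC m (0, 2 * (g - 1) * w) 2 1) / cnorm2 (besselC n (0, 2 * g * w) 2 1)).
Proof.
  unfold budak_magsq, budakG.
  replace (cscale (2 * (g - 1)) (0, w)) with (0, 2 * (g - 1) * w)
    by (unfold cscale; simpl; f_equal; ring).
  replace (cscale (2 * g) (0, w)) with (0, 2 * g * w) by (unfold cscale; simpl; f_equal; ring).
  destruct (besselC m (0, 2 * (g - 1) * w) 2 1) as [p1 p2].
  destruct (besselC n (0, 2 * g * w) 2 1) as [q1 q2].
  unfold cscale, cdiv, cmul, cinv, cnorm2; cbn [fst snd].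
  destruct (Req_dec (q1 ^ 2 + q2 ^ 2) 0) as [Z|Z].
  - assert (q1 = 0) by nra. assert (q2 = 0) by nra. subst. rewrite Z.
    unfold Rdiv. rewrite Rinv_0. ring.
  - field. auto.
Qed.

Lemma besselR_at_0 n : besselR n 0 2 1 = bessel_coef n n 2 1.
Proof.
  unfold besselR. destruct n as [|n]; [simpl; ring|].
  rewrite tech5, sum_eq_R0.
  - rewrite Nat.sub_diag. simpl. ring.
  - intros k Hk. rewrite pow_i by lia. ring.
Qed.

Definition budak_c1 g m n := (2 * (g - 1)) ^ 2 * bessel_e1 m - (2 * g) ^ 2 * bessel_e1 n.
Definition budak_c2 g m n := (2 * (g - 1)) ^ 4 * bessel_e2 m - (2 * g) ^ 4 * bessel_e2 n
  - budak_c1 g m n * (2 * g) ^ 2 * bessel_e1 n.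

Lemma budak_expansion g m n :
  expansion_c1c2 (budak_magsq g m n) (budak_c1 g m n) (budak_c2 g m n).
Proof.
  unfold expansion_c1c2. rewrite has_expansion_bigO.
  set (a := 2 * (g - 1)). set (b := 2 * g).
  set (bm := bessel_coef m m 2 1). set (bn := bessel_coef n n 2 1).
  assert (Hbm : bm <> 0) by (pose proof (bessel_coef_diag_pos m); unfold bm; lra).
  assert (Hbn : bn <> 0) by (pose proof (bessel_coef_diag_pos n); unfold bn; lra).
  assert (Hd0 : bn ^ 2 <> 0) by (apply pow_nonzero; auto).
  pose proof (quotient_jet _ _ _ _ _ _ _ _ Hd0 (besselC_sqnorm_jet m a) (besselC_sqnorm_jet n b))
    as Hq; simpl in Hq.
  apply (bigO_scal _ ((bn / bm) ^ 2)) in Hq.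
  refine (bigO_ext _ _ _ _ Hq). intros w.
  rewrite budak_magsq_eq. unfold budakK. rewrite !besselR_at_0. fold bm bn.
  cbn [sum_f_R0]. unfold budak_c2, budak_c1. fold a b.
  set (X := cnorm2 (besselC m (0, a * w) 2 1) / cnorm2 (besselC n (0, b * w) 2 1)).
  field. auto.
Qed.

Lemma two_INR_sub_3_neq_0 m : 2 * INR m - 3 <> 0.
Proof.
  destruct (Nat.le_gt_cases m 1) as [H|H];
    [apply (le_INR m 1) in H|apply (le_INR 2 m) in H]; simpl in H; lra.
Qed.

Section Gammas.

Variables m n : nat.
Hypothesis Hm : (1 <= m)%nat.
Hypothesis Hmn : (m < n)%nat.

Let P := 2 * INR n - 1.
Let Q := 2 * INR m - 1.

Lemma PQ_bounds : 1 <= Q /\ Q + 2 <= P.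
Proof.
  apply le_INR in Hm. apply le_INR in Hmn. rewrite S_INR in Hmn. unfold P, Q. simpl in Hm. lra.
Qed.

Lemma gamma_pm_eq : gamma_plus m n = (P + sqrt (P * Q)) / (P - Q) /\
  gamma_minus m n = (P - sqrt (P * Q)) / (P - Q).
Proof.
  assert (E : forall k, (1 <= k)%nat -> INR (2 * k - 1) = 2 * INR k - 1)
    by (intros k Hk; rewrite minus_INR, mult_INR by lia; simpl; ring).
  unfold gamma_plus, gamma_minus. rewrite !E, minus_INR by lia. fold P Q.
  replace (2 * (INR n - INR m)) with (P - Q) by (unfold P, Q; ring). tauto.
Qed.

Lemma sqrt_PQ_lt_mean : sqrt (P * Q) < (P + Q) / 2.
Proof.
  destruct PQ_bounds. rewrite <- (sqrt_square ((P + Q) / 2)) by lra.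
  apply sqrt_lt_1; nra.
Qed.

Lemma gamma_pm_gt_half : / 2 < gamma_plus m n /\ / 2 < gamma_minus m n.
Proof.
  destruct gamma_pm_eq as [-> ->]. destruct PQ_bounds.
  pose proof sqrt_PQ_lt_mean. pose proof (sqrt_pos (P * Q)).
  split; apply (Rmult_lt_reg_r (P - Q)); try lra;
    unfold Rdiv; rewrite Rmult_assoc, Rinv_l by lra; lra.
Qed.

Lemma budak_c1_factor g :
  budak_c1 g m n = (P - Q) / (P * Q) * ((g - gamma_plus m n) * (g - gamma_minus m n)).
Proof.
  destruct PQ_bounds. destruct gamma_pm_eq as [-> ->].
  assert (Hs : sqrt (P * Q) * sqrt (P * Q) = P * Q) by (apply sqrt_sqrt; nra).
  unfold budak_c1. rewrite !bessel_e1_eq by lia. fold P Q.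
  set (s := sqrt (P * Q)) in *.
  replace ((g - (P + s) / (P - Q)) * (g - (P - s) / (P - Q)))
    with (g ^ 2 - 2 * P / (P - Q) * g + (P * P - s * s) / ((P - Q) * (P - Q))) by (field; lra).
  rewrite Hs. field. repeat split; lra.
Qed.

Lemma budak_c1_eq_0_iff g :
  budak_c1 g m n = 0 <-> g = gamma_plus m n \/ g = gamma_minus m n.
Proof.
  destruct PQ_bounds. rewrite budak_c1_factor.
  assert (0 < (P - Q) / (P * Q)) by (apply Rdiv_lt_0_compat; nra).
  split.
  - intros Z. apply Rmult_integral in Z as [Z|Z]; [lra|].
    apply Rmult_integral in Z as [Z|Z]; [left|right]; lra.
  - intros [-> | ->]; ring.
Qed.

Lemma budak_c2_of_c1_eq_0 g : budak_c1 g m n = 0 ->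
  budak_c2 g m n = (2 * g) ^ 4 * (INR n - INR m) / (16 * P ^ 2 * (2 * INR m - 3) * (2 * INR n - 3)).
Proof.
  intros Hc1. destruct PQ_bounds.
  pose proof (two_INR_sub_3_neq_0 m). pose proof (two_INR_sub_3_neq_0 n).
  assert (Ha : (2 * (g - 1)) ^ 2 = (2 * g) ^ 2 * Q / P).
  { unfold budak_c1 in Hc1. rewrite !bessel_e1_eq in Hc1 by lia. fold P Q in Hc1.
    apply (Rmult_eq_reg_r (/ (4 * Q))); [|apply Rinv_neq_0_compat; lra].
    replace ((2 * g) ^ 2 * Q / P * / (4 * Q)) with ((2 * g) ^ 2 * / (4 * P)) by (field; lra).
    lra. }
  unfold budak_c2. rewrite Hc1, !bessel_e2_eq by lia. fold P Q.
  replace ((2 * (g - 1)) ^ 4) with (((2 * (g - 1)) ^ 2) ^ 2) by ring. rewrite Ha.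
  field. repeat split; lra.
Qed.

Lemma budak_c1_c2_not_both_0 g : 0 < g -> ~ (budak_c1 g m n = 0 /\ budak_c2 g m n = 0).
Proof.
  intros Hg [Hc1 Hc2]. rewrite budak_c2_of_c1_eq_0 in Hc2 by auto.
  destruct PQ_bounds. pose proof (lt_INR _ _ Hmn).
  pose proof (two_INR_sub_3_neq_0 m). pose proof (two_INR_sub_3_neq_0 n).
  unfold Rdiv in Hc2. apply Rmult_integral in Hc2 as [Hc2|Hc2].
  - apply Rmult_integral in Hc2 as [Hc2|Hc2]; [apply pow_nonzero in Hc2|]; lra.
  - revert Hc2. apply Rinv_neq_0_compat. repeat apply Rmult_integral_contrapositive_currified;
      try apply pow_nonzero; lra.
Qed.

End Gammas.

Theorem mainTheorem7 (m n : nat) (Hm : (1 <= m)%nat) (Hmn : (m < n)%nat) :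
  (/ 2 < gamma_plus m n /\ / 2 < gamma_minus m n) /\
  forall gamma : R, 0 < gamma ->
    let f := budak_magsq gamma m n in
    (exists c1 c2 : R, expansion_c1c2 f c1 c2) /\
    (forall c1 c2 : R, expansion_c1c2 f c1 c2 ->
       (c1 = 0 <-> (gamma = gamma_plus m n \/ gamma = gamma_minus m n)) /\
       ~ (c1 = 0 /\ c2 = 0)) /\
    (~ (gamma = gamma_plus m n \/ gamma = gamma_minus m n) -> maximally_flat f 1) /\
    (forall k : nat, (2 < k)%nat -> ~ maximally_flat f k) /\
    (maximally_flat f 2 <-> (gamma = gamma_plus m n \/ gamma = gamma_minus m n)).
Proof.
  split; [now apply gamma_pm_gt_half|]. intros g Hg f.
  pose proof (budak_expansion g m n) as Hexp.
  pose proof (budak_c1_eq_0_iff m n Hm Hmn g) as Hroots.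
  pose proof (budak_c1_c2_not_both_0 m n Hm Hmn g Hg) as Hnb.
  split; [|split; [|split; [|split]]].
  - eauto.
  - intros c1 c2 H. destruct (expansion_c1c2_unique _ _ _ _ _ H Hexp) as [-> ->]. auto.
  - intros Hne. apply (maximally_flat_of_expansion _ _ 5 1 Hexp); [lia|reflexivity| |].
    + intros [|[|i]] Hi; reflexivity || lia.
    + now rewrite Hroots.
  - intros k Hk Hflat. apply Hnb.
    split; [apply (maximally_flat_coef_zero _ _ 5 k Hexp Hflat 2)
           |apply (maximally_flat_coef_zero _ _ 5 k Hexp Hflat 4)]; lia.
  - split.
    + intros Hflat. apply Hroots, (maximally_flat_coef_zero _ _ 5 2 Hexp Hflat 2); lia.
    + intros Hr. apply Hroots in Hr.
      apply (maximally_flat_of_expansion _ _ 5 2 Hexp); [lia|reflexivity| |].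
      * intros [|[|[|[|i]]]] Hi; try reflexivity; try exact Hr; lia.
      * intros Hc2. now apply Hnb.
Qed.
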